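(* Let $S$ be a semiring and $P$ a left $S$-semimodule. (1) For every left $S$-semimodule $M$, $P$ is $M$-$e$-projective if and only if $P$ is normally $M$-projective. (2) $P$ is $e$-projective if and only if $P$ is normally projective.
   Context: A semiring $(S,+,0,\cdot,1)$ consists of a commutative monoid $(S,+,0)$ and a monoid $(S,\cdot,1)$ with $0\neq 1$, absorbing zero and both distributive laws; left $S$-semimodules and $S$-linear maps are as for modules without subtraction; $\mathrm{Hom}_S(P,X)$ is a commutative monoid under pointwise addition. For an $S$-linear $h:X\to Y$, $\mathrm{Ker}(h)=\{x\mid h(x)=0\}$; $h$ is $k$-normal if $h(x)=h(x')$ implies $x+k=x'+k'$ for some $k,k'\in\mathrm{Ker}(h)$; a normal epimorphism is a surjective $k$-normal map. A short exact sequence $0\to L\xrightarrow{f}M\xrightarrow{g}N\to 0$ (of semimodules or of commutative monoids) means: $f$ injective, $f(L)=\mathrm{Ker}(g)$, $g$ surjective and $k$-normal. $P$ is $M$-$e$-projective if for every short exact sequence $0\to L\xrightarrow{f}M\xrightarrow{g}N\to0$ of left $S$-semimodules (with middle term $M$), the sequence $0\to\mathrm{Hom}_S(P,L)\xrightarrow{f\circ-}\mathrm{Hom}_S(P,M)\xrightarrow{g\circ-}\mathrm{Hom}_S(P,N)\to0$ is a short exact sequence of commutative monoids; $P$ is $e$-projective if it is $M$-$e$-projective for all $M$. $P$ is normally $M$-projective if for every normal epimorphism $f:M\to N$ and every $S$-linear $g:P\to N$ there is an $S$-linear $h:P\to M$ with $f\circ h=g$, and whenever $h':P\to M$ is $S$-linear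 with $f\circ h'=g$, there exist $S$-linear $h_1,h_2:P\to M$ with $f\circ h_1=0=f\circ h_2$ and $h+h_1=h'+h_2$; $P$ is normally projective if normally $M$-projective for all $M$. *)

From HB Require Import structures.
From mathcomp Require Import all_boot all_algebra.
Set Implicit Arguments. Unset Strict Implicit. Unset Printing Implicit Defensive.
Import GRing.Theory.
Local Open Scope ring_scope.

(* Elements of Hom_S(P,X) are compared
   extensionally (pointwise), and the monoid structure on Hom_S(P,X) is the
   pointwise one (zero map, pointwise sum). *)

Section Defs.
Variable S : nzSemiRingType.

Definition k_normal (X Y : lSemiModType S) (h : {linear X -> Y}) : Prop :=
  forall x x' : X, h x = h x' ->
    exists k k' : X, h k = 0 /\ h k' = 0 /\ x + k = x' + k'.

Definition normal_epi (X Y : lSemiModType S) (h : {linear X -> Y}) : Prop :=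
  (forall y : Y, exists x : X, h x = y) /\ k_normal h.

Definition ses (L M N : lSemiModType S) (f : {linear L -> M}) (g : {linear M -> N}) : Prop :=
  injective f /\
  (forall m : M, g m = 0 <-> exists l : L, f l = m) /\
  (forall n : N, exists m : M, g m = n) /\
  k_normal g.

(* 0 -> Hom(P,L) -(f o -)-> Hom(P,M) -(g o -)-> Hom(P,N) -> 0 is a short
   exact sequence of commutative monoids (written out, with extensional
   equality of linear maps and pointwise monoid operations). *)
Definition hom_ses (P L M N : lSemiModType S) (f : {linear L -> M}) (g : {linear M -> N}) : Prop :=
  (forall h1 h2 : {linear P -> L}, (forall p, f (h1 p) = f (h2 p)) -> forall p, h1 p = h2 p) /\
  (forall h : {linear P -> M},
     (forall p, g (h p) = 0) <-> exists h' : {linear P -> L}, forall p, f (h' p) = h p) /\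
  (forall k : {linear P -> N}, exists h : {linear P -> M}, forall p, g (h p) = k p) /\
  (forall h h' : {linear P -> M}, (forall p, g (h p) = g (h' p)) ->
     exists k k' : {linear P -> M},
       (forall p, g (k p) = 0) /\ (forall p, g (k' p) = 0) /\
       (forall p, h p + k p = h' p + k' p)).

Definition M_e_projective (P M : lSemiModType S) : Prop :=
  forall (L N : lSemiModType S) (f : {linear L -> M}) (g : {linear M -> N}),
    ses f g -> hom_ses P f g.

Definition e_projective (P : lSemiModType S) : Prop :=
  forall M : lSemiModType S, M_e_projective P M.

Definition normally_M_projective (P M : lSemiModType S) : Prop :=
  forall (N : lSemiModType S) (f : {linear M -> N}) (g : {linear P -> N}),
    normal_epi f ->
    exists h : {linear P -> M},
      (forall p, f (h p) = g p) /\
      (forall h' : {linear P -> M}, (forall p, f (h' p) = g p) ->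
         exists h1 h2 : {linear P -> M},
           (forall p, f (h1 p) = 0) /\ (forall p, f (h2 p) = 0) /\
           (forall p, h p + h1 p = h' p + h2 p)).

Definition normally_projective (P : lSemiModType S) : Prop :=
  forall M : lSemiModType S, normally_M_projective P M.

End Defs.

(* Injectivity of f o - and exactness at Hom(P,M) hold for every
   P, because f is injective onto the kernel of g.  The remaining two clauses,
   surjectivity and k-normality of g o -, are a lifting property along the
   normal epimorphism g, which is what normal M-projectivity asserts.
   Conversely every normal epimorphism g : M -> N is the cokernel end of the
   short exact sequence 0 -> Ker g -> M -> N -> 0. *)

From HB Require Import structures.
From mathcomp Require Import all_boot all_algebra.
From Stdlib Require Import ClassicalEpsilon.
Set Implicit Arguments. Unset Strict Implicit. Unset Printing Implicit Defensive.
Import GRing.Theory.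
Local Open Scope ring_scope.

Section Kernel.
Variables (S : nzSemiRingType) (M N : lSemiModType S) (f : {linear M -> N}).

Definition ker_mem (x : M) : bool :=
  if excluded_middle_informative (f x = 0) then true else false.

Lemma ker_memP x : ker_mem x <-> f x = 0.
Proof. by rewrite /ker_mem; case: excluded_middle_informative. Qed.

Definition ker_pred := fun x : M => ker_mem x.
Arguments ker_pred _ /.
Definition ker_qual := [qualify a x | ker_pred x].

Fact ker_subsemimod_closed : subsemimod_closed ker_qual.
Proof.
split=> [|a x]; first split=> [|x y]; rewrite !qualifE /=.
- by apply/ker_memP; rewrite raddf0.
- move=> /ker_memP fx0 /ker_memP fy0; apply/ker_memP.
  by rewrite raddfD /= fx0 fy0 addr0.
- by move=> /ker_memP fx0; apply/ker_memP; rewrite linearZ /= fx0 scaler0.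
Qed.

HB.instance Definition _ :=
  GRing.isSubSemiModClosed.Build S M ker_pred ker_subsemimod_closed.

Record ker_sub : predArgType := KerSub { ker_val :> M; _ : ker_val \is a ker_qual }.
HB.instance Definition _ := [isSub for @ker_val].
HB.instance Definition _ := [Choice of ker_sub by <:].
HB.instance Definition _ := [SubChoice_isSubLSemiModule of ker_sub by <:].

Definition ker_incl : {linear ker_sub -> M} := val.

Lemma ker_incl_ses : normal_epi f -> ses ker_incl f.
Proof.
move=> [f_surj f_knormal]; split; first exact: val_inj.
split=> // m; split=> [fm0 | [k <-]].
- have km : m \is a ker_qual by rewrite qualifE /=; apply/ker_memP.
  by exists (KerSub km).
- by apply/ker_memP; exact: (valP k).
Qed.

End Kernel.

Section FactorThroughInjective.
Variables (S : nzSemiRingType) (P L M : lSemiModType S) (f : {linear L -> M}).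
Hypothesis f_inj : injective f.
Variable h : {linear P -> M}.
Hypothesis h_im : forall p, exists l, f l = h p.

Let preim (p : P) : L := proj1_sig (constructive_indefinite_description _ (h_im p)).

Let preimK p : f (preim p) = h p.
Proof. exact: (proj2_sig (constructive_indefinite_description _ (h_im p))). Qed.

Let preim_semilinear : semilinear_for *:%R preim.
Proof.
split=> [a x|x y]; apply: f_inj.
- by rewrite linearZ /= !preimK linearZ.
- by rewrite raddfD /= !preimK raddfD.
Qed.

HB.instance Definition _ := GRing.isSemilinear.Build S P L *:%R preim preim_semilinear.

Lemma linear_factor_injective : exists h' : {linear P -> L}, forall p, f (h' p) = h p.
Proof. by exists preim. Qed.

End FactorThroughInjective.

Section EProjectiveNormallyProjective.
Variables (S : nzSemiRingType) (P M : lSemiModType S).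

Lemma M_e_projective_normally : M_e_projective P M -> normally_M_projective P M.
Proof.
move=> Pe N f g f_nepi.
have [_ [_ [comp_surj comp_knormal]]] := Pe _ _ _ _ (ker_incl_ses f_nepi).
have [h fh] := comp_surj g.
exists h; split=> // h' fh'.
exact: comp_knormal (fun p => etrans (fh p) (esym (fh' p))).
Qed.

(* Both [h] and [h'] are lifts of [g o h], so each agrees with one fixed lift
   [h0] up to maps into [Ker g]; adding these corrections crosswise relates
   [h] to [h']. *)
Lemma normally_M_projective_comp_k_normal (N : lSemiModType S)
    (g : {linear M -> N}) (h h' : {linear P -> M}) :
  normally_M_projective P M -> normal_epi g ->
  (forall p, g (h p) = g (h' p)) ->
  exists k k' : {linear P -> M},
    (forall p, g (k p) = 0) /\ (forall p, g (k' p) = 0) /\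
    (forall p, h p + k p = h' p + k' p).
Proof.
move=> Pn g_nepi gh.
have [h0 [_ h0_unique]] := Pn N g (g \o h : {linear P -> N}) g_nepi.
have [k1 [k2 [gk1 [gk2 e]]]] := h0_unique h (fun p => erefl).
have [k1' [k2' [gk1' [gk2' e']]]] := h0_unique h' (fun p => esym (gh p)).
exists (k2 \+ k1' : {linear P -> M}), (k2' \+ k1 : {linear P -> M}).
split; first by move=> p; rewrite raddfD -[0](addr0 0); congr (_ + _); [exact: gk2 | exact: gk1'].
split; first by move=> p; rewrite raddfD -[0](addr0 0); congr (_ + _); [exact: gk2' | exact: gk1].
by move=> p /=; rewrite addrA -e addrAC e' addrA.
Qed.

Lemma normally_M_projective_e : normally_M_projective P M -> M_e_projective P M.
Proof.
move=> Pn L N f g [f_inj [im_f_ker [g_surj g_knormal]]].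
have g_nepi : normal_epi g by [].
split; first by move=> h1 h2 fh p; apply: f_inj.
split.
  move=> h; split=> [gh0 | [h' fh'] p]; last by apply/im_f_ker; exists (h' p).
  exact: linear_factor_injective (fun p => proj1 (im_f_ker _) (gh0 p)).
split; last by move=> h h'; exact: normally_M_projective_comp_k_normal.
by move=> k; have [h [gh _]] := Pn N g k g_nepi; exists h.
Qed.

End EProjectiveNormallyProjective.

Theorem mainTheorem6 (S : nzSemiRingType) (P : lSemiModType S) :
  (forall M : lSemiModType S, M_e_projective P M <-> normally_M_projective P M) /\
  (e_projective P <-> normally_projective P).
Proof.
have eq_M M : M_e_projective P M <-> normally_M_projective P M.
  by split; [exact: M_e_projective_normally | exact: normally_M_projective_e].
by split=> //; split=> Pproj M; apply/eq_M.
Qed.
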